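(* Let $n\ge k\ge 2$ and $r\ge 0$ be integers. Then \[ \mathsf{opt}_{\operatorname{bandit}}^{\operatorname{det}}(n,k,r)\le \frac{e}{e-1}\,k\left(\ln(n/k)+r\right)+k-1. \]
   Context: Prediction with expert advice: $\mathcal{Y}=\{1,\dots,k\}$, $\mathcal{X}=[k]^n$, experts $h_i(x)=x_i$, $i=1,\dots,n$. $\mathcal{P}_r$ is the set of finite sequences of examples in $\mathcal{X}\times\mathcal{Y}$ on which some $h_i$ errs on at most $r$ examples. Bandit feedback: each round the adversary presents $x_t$, a deterministic learner predicts $\hat y_t$ as a function of past observations and $x_t$, and learns only whether $\hat y_t$ equals the true label $y_t$. $\mathsf{opt}_{\operatorname{bandit}}^{\operatorname{det}}(n,k,r)$ is the infimum over deterministic learners of the supremum over $S\in\mathcal{P}_r$ of the number of mistakes ($\hat y_t\ne y_t$). *)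

From HB Require Import structures.
From mathcomp Require Import all_boot all_order all_algebra.
From mathcomp Require Import all_classical all_reals all_analysis.
Set Implicit Arguments. Unset Strict Implicit. Unset Printing Implicit Defensive.
Import Order.TTheory GRing.Theory Num.Theory.
Local Open Scope classical_set_scope.
Local Open Scope ring_scope.

(* Labels Y = {1,...,k} are represented by 'I_k = {0,...,k-1};
   instances X = [k]^n are represented by {ffun 'I_n -> 'I_k};
   expert i : 'I_n predicts h_i(x) = x i. *)
Definition inst (n k : nat) := {ffun 'I_n -> 'I_k}.
Definition example (n k : nat) := (inst n k * 'I_k)%type.

Definition in_Pr (n k r : nat) (S : seq (example n k)) : Prop :=
  exists i : 'I_n, (count (fun p : example n k => p.1 i != p.2) S <= r)%N.

(* A past observation of a bandit learner: the instance x_s, the learner's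
   own prediction yhat_s, and the feedback bit [yhat_s == y_s]. *)
Definition obs (n k : nat) := (inst n k * 'I_k * bool)%type.

Definition learner (n k : nat) := seq (obs n k) -> inst n k -> 'I_k.

Fixpoint run_mistakes (n k : nat) (L : learner n k) (h : seq (obs n k))
    (S : seq (example n k)) : nat :=
  match S with
  | [::] => 0%N
  | (x, y) :: S' =>
      let yh := L h x in
      ((yh != y) + run_mistakes L (rcons h (x, yh, yh == y)) S')%N
  end.

Definition mistakes (n k : nat) (L : learner n k) (S : seq (example n k)) : nat :=
  run_mistakes L [::] S.

Definition opt_bandit_det (R : realType) (n k r : nat) : \bar R :=
  ereal_inf [set ereal_sup [set ((mistakes L S)%:R)%:E | S in in_Pr r]
            | L in [set: learner n k]].

From HB Require Import structures.
From mathcomp Require Import all_boot all_order all_algebra.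
From mathcomp Require Import all_classical all_reals all_analysis.
From mathcomp Require Import lra ring zify.
Set Implicit Arguments. Unset Strict Implicit. Unset Printing Implicit Defensive.
Import Order.TTheory GRing.Theory Num.Theory.
Local Open Scope ring_scope.

(* The learner runs a weighted majority vote in which expert i has weight
   e^(r - c_i), where c_i counts the rounds in which the learner erred while
   predicting the same label as expert i; under bandit feedback these are
   exactly the rounds known to be mistakes of i, and experts with c_i > r are
   discarded.  The total weight W starts at n e^r and stays >= 1 because the
   best expert is never discarded.  On a mistake the predicted label carries
   at least W/k of the weight, all of which shrinks by the factor e, so W is
   multiplied by at most 1 - (1 - 1/e)/k and also drops by at least 1.  Hence
   at most e/(e-1) k ln(W_0/k) mistakes happen while W >= k, and at most k - 1
   afterwards. *)

Lemma mul2_expRN1_le1 (R : realType) : 2 * expR (-1) <= 1 :> R.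
Proof.
rewrite expRN ler_pdivrMr ?expR_gt0 // mul1r.
by have := expR_ge1Dx (1 : R); rewrite (_ : 1 + 1 = 2).
Qed.

Definition mw_rate {R : realType} : R := 1 - expR (-1).

Lemma mw_rate_ge0 (R : realType) : 0 <= mw_rate :> R.
Proof. by have := @mul2_expRN1_le1 R; have := expR_ge0 (-1 : R); rewrite /mw_rate; lra. Qed.

Section Potential.
Variable R : realType.
Variable k : nat.
Hypothesis k_gt0 : (0 < k)%N.

Definition mw_log_bound (W : R) : R :=
  expR 1 / (expR 1 - 1) * k%:R * ln (W / k%:R) + k%:R - 1.

Definition mw_potential (W : R) : R :=
  if W < k%:R then W - 1 else mw_log_bound W.

Let k_pos : 0 < k%:R :> R. Proof. by rewrite ltr0n. Qed.

Let e_gt1 : 1 < expR 1 :> R. Proof. by rewrite expR_gt1. Qed.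

Let mw_coef_ge0 : 0 <= expR 1 / (expR 1 - 1) * k%:R :> R.
Proof. by rewrite mulr_ge0 ?ler0n ?divr_ge0 ?expR_ge0 // subr_ge0 ltW. Qed.

Lemma mw_log_bound_ge W : k%:R <= W -> k%:R - 1 <= mw_log_bound W.
Proof.
move=> kW; rewrite /mw_log_bound -addrA addrC lerDl.
by rewrite mulr_ge0 // ln_ge0 // ler_pdivlMr // mul1r.
Qed.

Lemma mw_log_bound_step W W' :
  k%:R <= W' -> W' <= W * (1 - mw_rate / k%:R) ->
  mw_log_bound W' + 1 <= mw_log_bound W.
Proof.
move=> kW' W'W.
have W'_pos : 0 < W' by apply: lt_le_trans kW'.
have W_pos : 0 < W.
  have a_ge0 : 0 <= 1 - mw_rate / k%:R :> R.
    rewrite subr_ge0 ler_pdivrMr // mul1r.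
    have : 1 <= k%:R :> R by rewrite ler1n.
    by have := expR_ge0 (-1 : R); rewrite /mw_rate; lra.
  move: a_ge0 W'W; set a := 1 - _ => a_ge0 W'W; nra.
have ln_drop : ln W' <= ln W - mw_rate / k%:R.
  have -> : ln W - mw_rate / k%:R = ln (W * expR (- (mw_rate / k%:R))).
    by rewrite lnM ?posrE ?expR_gt0 // expRK.
  rewrite ler_ln ?posrE ?mulr_gt0 ?expR_gt0 //; apply: le_trans W'W _.
  rewrite ler_pM2l //.
  by have := expR_ge1Dx (- (mw_rate / k%:R) : R); rewrite addrC.
have coef_rate : expR 1 / (expR 1 - 1) * k%:R * (mw_rate / k%:R) = 1 :> R.
  rewrite /mw_rate expRN; field.
  by rewrite !gt_eqF ?subr_gt0 ?expR_gt0.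
rewrite /mw_log_bound !ln_div ?posrE //.
have := ler_wpM2l mw_coef_ge0 ln_drop; rewrite mulrBr coef_rate.
lra.
Qed.

Lemma mw_potential_ge0 W : 1 <= W -> 0 <= mw_potential W.
Proof.
rewrite /mw_potential => W_ge1; case: (ltP W k%:R) => [_|kW]; first by rewrite subr_ge0.
have := mw_log_bound_ge kW; have : 1 <= k%:R :> R by rewrite ler1n.
lra.
Qed.

Lemma mw_potential_step W W' (M : nat) :
  W' <= W * (1 - mw_rate / k%:R) -> W' + 1 <= W ->
  M%:R <= mw_potential W' -> M.+1%:R <= mw_potential W.
Proof.
rewrite /mw_potential -natr1 => W'W W'W1.
case: (ltP W k%:R) => [Wk|kW]; case: (ltP W' k%:R) => [W'k|kW'] M_le; try lra.
- (* M is an integer, so M + 1 <= W' < k forces M + 2 <= k. *)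
  have M_lt : (M.+1 < k)%N by rewrite -(ltr_nat R) -natr1; lra.
  have : M.+2%:R <= k%:R :> R by rewrite ler_nat.
  by have := mw_log_bound_ge kW; rewrite -!natr1; lra.
- by have := mw_log_bound_step kW' W'W; lra.
Qed.
End Potential.

Section WeightedMajority.
Variable R : realType.
Variables n k r : nat.
Variable y0 : 'I_k.
Implicit Types (h : seq (obs n k)) (x : inst n k) (y yh : 'I_k) (i : 'I_n).

(* Expert i is known to have erred whenever the learner erred while
   predicting the same label as expert i. *)
Definition miss_count (h : seq (obs n k)) (i : 'I_n) : nat :=
  count (fun o : obs n k => ~~ o.2 && (o.1.1 i == o.1.2)) h.

Definition expert_weight (h : seq (obs n k)) (i : 'I_n) : R :=
  if (miss_count h i <= r)%N then expR (r%:R - (miss_count h i)%:R) else 0.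

Definition total_weight (h : seq (obs n k)) : R := \sum_i expert_weight h i.

Definition label_weight (h : seq (obs n k)) (x : inst n k) (y : 'I_k) : R :=
  \sum_(i | x i == y) expert_weight h i.

Definition wm_learner : learner n k :=
  fun h x => [arg max_(y > y0) label_weight h x y]%O.

Lemma miss_count_rcons h x yh b i :
  miss_count (rcons h (x, yh, b)) i = (miss_count h i + (~~ b && (x i == yh)))%N.
Proof. by rewrite /miss_count -cats1 count_cat /= addn0. Qed.

Lemma expert_weight_ge0 h i : 0 <= expert_weight h i.
Proof. by rewrite /expert_weight; case: ifP => // _; apply: expR_ge0. Qed.

Lemma expert_weight_ge1 h i : (miss_count h i <= r)%N -> 1 <= expert_weight h i.
Proof.
move=> alive; rewrite /expert_weight alive -[X in X <= _]expR0.
by rewrite ler_expR subr_ge0 ler_nat.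
Qed.

Lemma expert_weight_le_total h i : expert_weight h i <= total_weight h.
Proof.
rewrite /total_weight (bigD1 i) //= lerDl.
by apply: sumr_ge0 => j _; apply: expert_weight_ge0.
Qed.

Lemma expert_weight_rcons_eq h x yh b i :
  b || (x i != yh) -> expert_weight (rcons h (x, yh, b)) i = expert_weight h i.
Proof.
rewrite /expert_weight miss_count_rcons.
by case: b => /= [_|/negbTE ->]; rewrite addn0.
Qed.

Lemma expert_weight_rcons_miss h x yh i : x i == yh ->
  expert_weight (rcons h (x, yh, false)) i <= expert_weight h i * expR (-1).
Proof.
move=> agree; rewrite /expert_weight miss_count_rcons agree addn1.
case: ltnP => [lt_r|ge_r]; last first.
  by case: leqP => _; rewrite ?mulr_ge0 ?expR_ge0 // ltnW.
by rewrite ltnW // -natr1 opprD addrA expRD.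
Qed.

Lemma expert_weight_rcons_miss_alive h x yh i :
  x i == yh -> (miss_count h i <= r)%N ->
  expert_weight (rcons h (x, yh, false)) i + 1 <= expert_weight h i.
Proof.
move=> agree alive; rewrite /expert_weight miss_count_rcons agree addn1 alive.
case: ltnP => [lt_r|ge_r]; last first.
  have -> : miss_count h i = r by apply/eqP; rewrite eqn_leq alive.
  by rewrite subrr expR0 add0r.
rewrite -natr1 opprD addrA expRD.
have E_ge2 : 2 <= expR (r%:R - (miss_count h i)%:R) :> R.
  have : (miss_count h i)%:R + 1 <= r%:R :> R by rewrite natr1 ler_nat.
  by have := expR_ge1Dx (r%:R - (miss_count h i)%:R : R); lra.
have := @mul2_expRN1_le1 R; have := expR_ge0 (-1 : R).
set E := expR _ in E_ge2 *; set u := expR _; nra.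
Qed.

Lemma sum_label_weight h x : \sum_y label_weight h x y = total_weight h.
Proof. by rewrite /total_weight (partition_big (fun i => x i) xpredT). Qed.

Lemma total_weight_le_wm_label h x :
  total_weight h <= k%:R * label_weight h x (wm_learner h x).
Proof.
have wm_max y : label_weight h x y <= label_weight h x (wm_learner h x).
  by rewrite /wm_learner; case: arg_maxP => // z _; apply.
rewrite -(sum_label_weight h x); apply: le_trans (ler_sum _ (fun y _ => wm_max y)) _.
by rewrite sumr_const card_ord mulr_natl.
Qed.

Lemma total_weight_rcons_hit h x yh :
  total_weight (rcons h (x, yh, true)) = total_weight h.
Proof. by apply: eq_bigr => i _; apply: expert_weight_rcons_eq. Qed.

Lemma total_weight_rcons_miss h x yh :
  total_weight h - total_weight (rcons h (x, yh, false)) =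
  \sum_(i | x i == yh) (expert_weight h i - expert_weight (rcons h (x, yh, false)) i).
Proof.
rewrite /total_weight -sumrB (bigID (fun i => x i == yh)) /=.
rewrite [X in _ + X]big1 ?addr0 // => i disagree.
by rewrite expert_weight_rcons_eq ?subrr.
Qed.

Lemma total_weight_miss_rate h x :
  total_weight (rcons h (x, wm_learner h x, false)) <=
  total_weight h * (1 - mw_rate / k%:R).
Proof.
set yh := wm_learner h x; set h' := rcons h _.
have k_pos : 0 < k%:R :> R by rewrite ltr0n (leq_ltn_trans _ (ltn_ord y0)).
suff drop : total_weight h * (mw_rate / k%:R) <= total_weight h - total_weight h'.
  by rewrite mulrBr mulr1; lra.
rewrite total_weight_rcons_miss mulrCA.
apply: le_trans (_ : mw_rate * label_weight h x yh <= _).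
  rewrite ler_wpM2l ?mw_rate_ge0 // ler_pdivrMr // mulrC.
  exact: total_weight_le_wm_label.
rewrite mulr_sumr; apply: ler_sum => i agree.
have := expert_weight_rcons_miss h agree; rewrite /mw_rate mulrBl mul1r mulrC.
lra.
Qed.

Lemma total_weight_miss_ge1 h x : 0 < total_weight h ->
  total_weight (rcons h (x, wm_learner h x, false)) + 1 <= total_weight h.
Proof.
move=> W_pos; set yh := wm_learner h x; set h' := rcons h _.
have [i /andP[agree alive]] : exists i, (x i == yh) && (miss_count h i <= r)%N.
  apply/existsP; apply: contraT; rewrite negb_exists => /forallP dead.
  have label0 : label_weight h x yh = 0.
    apply: big1 => i agree; have := dead i.
    by rewrite agree /= -ltnNge /expert_weight => /ltn_geF ->.
  by have := total_weight_le_wm_label h x; rewrite -/yh label0 mulr0; lra.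
suff : 1 <= total_weight h - total_weight h' by lra.
rewrite total_weight_rcons_miss (bigD1 i agree) /=.
have other_ge0 : 0 <= \sum_(j | (x j == yh) && (j != i))
                        (expert_weight h j - expert_weight h' j).
  apply: sumr_ge0 => j /andP[agree_j _]; rewrite subr_ge0.
  apply: le_trans (expert_weight_rcons_miss h agree_j) _.
  by rewrite ler_piMr ?expert_weight_ge0 // expR_le1 lerN10.
by have := expert_weight_rcons_miss_alive agree alive; lra.
Qed.

Lemma run_mistakes_le_potential S h i :
  (count (fun p : example n k => p.1 i != p.2) S + miss_count h i <= r)%N ->
  (run_mistakes wm_learner h S)%:R <= mw_potential k (total_weight h).
Proof.
have k_gt0 : (0 < k)%N by apply: leq_ltn_trans (ltn_ord y0).
elim: S h => [|[x y] S IH] h /= budget.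
  apply: (mw_potential_ge0 k_gt0); apply: le_trans (expert_weight_le_total h i).
  exact: expert_weight_ge1.
have W_ge1 : 1 <= total_weight h.
  apply: le_trans (expert_weight_le_total h i); apply: expert_weight_ge1.
  by apply: leq_trans budget; rewrite leq_addl.
case: (eqVneq (wm_learner h x) y) => [->|miss].
  rewrite /= add0n -(total_weight_rcons_hit h x y); apply: IH.
  by rewrite miss_count_rcons /= addn0; apply: leq_trans budget; lia.
rewrite /= add1n.
apply: (mw_potential_step k_gt0 (total_weight_miss_rate _ _)).
  by apply: total_weight_miss_ge1; apply: lt_le_trans W_ge1.
apply: IH; rewrite miss_count_rcons /=; move: budget.
by case: (eqVneq (x i) (wm_learner h x)) => [->|_]; rewrite ?miss ?eqxx /=; lia.
Qed.

Lemma total_weight_nil : total_weight [::] = n%:R * expR r%:R.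
Proof.
rewrite /total_weight (eq_bigr (fun _ => expR r%:R)) => [|i _].
  by rewrite sumr_const card_ord mulr_natl.
by rewrite /expert_weight /miss_count /= subr0.
Qed.

End WeightedMajority.

Theorem corollary4p3 (R : realType) (n k r : nat) :
  (2 <= k)%N -> (k <= n)%N ->
  (opt_bandit_det R n k r <=
   ((expR (1 : R) / (expR 1 - 1)) * k%:R * (ln (n%:R / k%:R) + r%:R)
      + k%:R - 1)%:E)%E.
Proof.
move=> k_ge2 k_le_n.
have k_gt0 : (0 < k)%N by apply: ltnW.
pose L : learner n k := wm_learner R r (Ordinal k_gt0).
apply: le_trans (_ : ereal_sup [set (mistakes L S)%:R%:E | S in in_Pr r] <= _)%E.
  by apply: ereal_inf_lbound; exists L.
apply: ge_ereal_sup => _ [S [i best] <-]; rewrite lee_fin.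
have := @run_mistakes_le_potential R _ _ r (Ordinal k_gt0) S [::] i.
rewrite /miss_count addn0 => /(_ best).
have k_pos : 0 < k%:R :> R by rewrite ltr0n.
have n_pos : 0 < n%:R :> R by rewrite ltr0n (leq_trans k_gt0).
have k_le_W0 : k%:R <= n%:R * expR r%:R :> R.
  apply: le_trans (_ : n%:R <= _); first by rewrite ler_nat.
  by rewrite ler_peMr ?ler0n // -[X in X <= _]expR0 ler_expR.
rewrite total_weight_nil /mw_potential ltNge k_le_W0 /= /mw_log_bound.
by rewrite [n%:R * _ / _]mulrAC lnM ?posrE ?divr_gt0 ?expR_gt0 // expRK.
Qed.
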